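(* Let $G$ be a connected interval graph with a fixed interval representation in which all right endpoints are distinct, and let $V_2$ be the set of vertices with final label 2 in the labeling described in the context. Then for every dominating set $D$ of $G$, $D\leftrightarrow_{|D|+1} V_2$.
   Context: $G$ is given by closed intervals $I_v=[l(v),r(v)]$, $v\in V(G)$, with $uv\in E(G)$ iff $I_u\cap I_v\ne\emptyset$. Labeling procedure, repeated until all vertices are labeled: (1) pick the unlabeled vertex $v_i$ with minimum $r$-value among unlabeled vertices and give it label 1; (2) let $v_j$ be the vertex of $N[v_i]$ with maximum $r$-value (possibly already labeled, possibly $v_j=v_i$) and (re)label $v_j$ with label 2; (3) give label 3 to every still unlabeled vertex of $N(v_j)$. $N[v]$, $N(v)$ are closed and open neighbourhoods. A set $D\subseteq V(G)$ is a dominating set if every vertex is in $D$ or adjacent to a vertex of $D$. Two dominating sets $D,D'$ are adjacent if $|D\triangle D'|=1$. For dominating sets $D_p,D_q$ and an integer $k>0$, write $D_p\leftrightarrow_k D_q$ if there is a sequence $D_0=D_p,\dots,D_\ell=D_q$ ($\ell\ge0$) of dominating sets of $G$ with consecutive sets adjacent and $|D_i|\le k$ for all $i$. *)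

From HB Require Import structures.
From mathcomp Require Import all_boot all_order.
Set Implicit Arguments. Unset Strict Implicit. Unset Printing Implicit Defensive.
Import Order.TTheory.
Local Open Scope order_scope.

Section IntervalGraph.
Context {d : Order.disp_t} {R : orderType d} {V : finType}.
Variables (l r : V -> R).

(* Closed intervals I_v = [l v, r v] (with l v <= r v assumed in the theorem)
   intersect iff l u <= r v and l v <= r u.  Simple graph: no loops. *)
Definition iadj : rel V := fun u v => (u != v) && (l u <= r v) && (l v <= r u).

Definition Ncl (v : V) : pred V := fun u => (u == v) || iadj v u.

(* Labels: 0 = unlabeled, 1, 2, 3. One round of the labeling procedure. *)
Definition label_step (lab : {ffun V -> nat}) : {ffun V -> nat} :=
  match [pick v | lab v == 0%N] with
  | None => lab
  | Some v0 =>
    let vi := [arg min_(v < v0 | lab v == 0%N) r v] in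
    let vj := [arg max_(u > vi | Ncl vi u) r u] in
    [ffun u => if u == vj then 2%N
               else if u == vi then 1%N
               else if (lab u == 0%N) && iadj vj u then 3%N
               else lab u]
  end.

(* Each round labels at least one new vertex, so #|V| rounds suffice. *)
Definition final_labels : {ffun V -> nat} :=
  iter #|V| label_step [ffun _ => 0%N].

Definition V2 : {set V} := [set v | final_labels v == 2%N].

Definition dominating (D : {set V}) : bool :=
  [forall v, (v \in D) || [exists u in D, iadj u v]].

Definition ds_adjacent (D D' : {set V}) : bool :=
  #|(D :\: D') :|: (D' :\: D)| == 1%N.

Definition reconf (k : nat) (Dp Dq : {set V}) : Prop :=
  exists s : seq {set V},
    [/\ path ds_adjacent Dp s, last Dp s = Dq &
        all (fun A => dominating A && (#|A| <= k)%N) (Dp :: s)].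

Definition connected_graph : Prop := forall u v : V, connect iadj u v.

End IntervalGraph.

(* Run the labeling procedure and carry along a dominating set Dc with
   |Dc| <= |D| that contains every vertex labeled 2 so far and is reachable
   from D through dominating sets of size at most |D| + 1.  Invariantly, every
   labeled vertex has a label-2 vertex in its closed neighbourhood, and the
   closed neighbourhood of a label-2 vertex is fully labeled.  When a round
   picks v_i and v_j outside Dc, add v_j and then delete a vertex u of Dc
   dominating v_i: u is not labeled 2, the labeled vertices u dominated are
   still dominated by label-2 vertices, and the unlabeled ones x satisfy
   r(v_i) <= r(x), so l(v_j) <= r(v_i) <= r(x) and l(x) <= r(u) <= r(v_j) put
   them in N[v_j].  At the end all vertices are labeled, so V_2 dominates and
   the extra vertices of Dc can be deleted one at a time. *)

From HB Require Import structures.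
From mathcomp Require Import all_boot all_order.
Import Order.TTheory.

Section Reconfiguration.
Context {d : Order.disp_t} {R : orderType d} {V : finType} {l r : V -> R}.
Hypothesis hlr : forall v, (l v <= r v)%O.

Local Notation adj := (iadj l r).
Local Notation N := (Ncl l r).

Lemma iadjC u v : adj u v = adj v u.
Proof. by rewrite /iadj eq_sym andbAC -andbA [(_ <= _)%O && _]andbC andbA. Qed.

Lemma NclC u v : N u v = N v u.
Proof. by rewrite /Ncl eq_sym iadjC. Qed.

Lemma dominatingP (A : {set V}) :
  reflect (forall x, exists2 y, y \in A & N y x) (dominating l r A).
Proof.
apply: (iffP forallP) => domA x.
  case/orP: (domA x) => [xA | /existsP[y /andP[yA adj_yx]]].
    by exists x; rewrite // /Ncl eqxx.
  by exists y; rewrite // /Ncl adj_yx orbT.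
case: (domA x) => y yA /orP[/eqP-> | adj_yx]; first by rewrite yA.
by apply/orP; right; apply/existsP; exists y; rewrite yA.
Qed.

Lemma dominatingS {A B : {set V}} :
  A \subset B -> dominating l r A -> dominating l r B.
Proof.
move=> sAB /dominatingP domA; apply/dominatingP => x.
by have [y /(subsetP sAB) yB] := domA x; exists y.
Qed.

Lemma ds_adjacentU1 {A : {set V}} {x} : x \notin A -> ds_adjacent A (x |: A).
Proof.
move=> xA; rewrite /ds_adjacent (_ : _ :|: _ = [set x]) ?cards1 //.
apply/setP => y; rewrite !inE; case: (y =P x) => [->|]; last by case: (y \in A).
by rewrite (negbTE xA).
Qed.

Lemma ds_adjacentD1 {A : {set V}} {x} : x \in A -> ds_adjacent A (A :\ x).
Proof.
move=> xA; rewrite /ds_adjacent (_ : _ :|: _ = [set x]) ?cards1 //.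
apply/setP => y; rewrite !inE; case: (y =P x) => [->|]; last by case: (y \in A).
by rewrite xA.
Qed.

Lemma reconf_refl k (A : {set V}) :
  dominating l r A -> (#|A| <= k)%N -> reconf l r k A A.
Proof. by move=> domA cardA; exists [::]; split => //=; rewrite domA cardA. Qed.

Lemma reconf_rcons {k} {A B C : {set V}} :
  reconf l r k A B -> ds_adjacent B C -> dominating l r C -> (#|C| <= k)%N ->
  reconf l r k A C.
Proof.
case=> s [pathAs lastAs alls] adjBC domC cardC; exists (rcons s C); split.
- by rewrite rcons_path pathAs lastAs.
- by rewrite last_rcons.
- by rewrite -rcons_cons all_rcons domC cardC.
Qed.

Lemma dominating_exchange (A : {set V}) u w :
  dominating l r A ->
  (forall x, N u x -> exists2 y, y \in (w |: A) :\ u & N y x) ->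
  dominating l r ((w |: A) :\ u).
Proof.
move=> /dominatingP domA domNu; apply/dominatingP => x.
have [y yA] := domA x; case: (y =P u) => [-> /domNu // | /eqP yu Nyx].
by exists y; rewrite // !inE yu yA orbT.
Qed.

Lemma card_exchange (A : {set V}) u w :
  w \notin A -> u \in A -> #|(w |: A) :\ u| = #|A|.
Proof.
move=> wA uA; have uwA : u \in w |: A by rewrite inE uA orbT.
by have := cardsD1 u (w |: A); rewrite uwA cardsU1 wA add1n => -[].
Qed.

Lemma reconf_exchange k (D A : {set V}) u w :
  reconf l r k.+1 D A -> w \notin A -> u \in A -> (#|A| <= k)%N ->
  dominating l r A -> dominating l r ((w |: A) :\ u) ->
  reconf l r k.+1 D ((w |: A) :\ u).
Proof.
move=> reconfA wA uA cardA domA domA'.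
have uwA : u \in w |: A by rewrite inE uA orbT.
apply: (reconf_rcons _ (ds_adjacentD1 uwA) domA'); last first.
  by rewrite card_exchange // ltnW.
apply: (reconf_rcons reconfA (ds_adjacentU1 wA)); last by rewrite cardsU1 wA.
by apply: dominatingS domA; apply: subsetUr.
Qed.

Lemma reconf_subset k (D A B : {set V}) :
  dominating l r B -> B \subset A -> (#|A| <= k)%N ->
  reconf l r k D A -> reconf l r k D B.
Proof.
move=> domB; move: {2}#|A :\: B| (erefl #|A :\: B|) => n.
elim: n A => [|n IHn] A cardAB sBA cardA reconfA.
  suff <- : A = B by [].
  apply/eqP; rewrite eqEsubset sBA andbT -setD_eq0.
  by rewrite -cards_eq0 cardAB.
have [u] : exists u, u \in A :\: B.
  by apply/set0Pn; rewrite -card_gt0 cardAB.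
rewrite inE => /andP[uB uA].
have sBAu : B \subset A :\ u.
  by apply/subsetP => x xB; rewrite !inE (subsetP sBA) // andbT; apply: contraNneq uB => <-.
have cardAu : (#|A :\ u| <= k)%N.
  exact: leq_trans (subset_leq_card (subsetDl A [set u])) cardA.
apply: (IHn (A :\ u) _ sBAu cardAu); last first.
  exact: (reconf_rcons reconfA (ds_adjacentD1 uA) (dominatingS sBAu domB) cardAu).
move: cardAB; rewrite (cardsD1 u) !inE uB uA add1n => -[<-].
by rewrite !setDDl setUC.
Qed.

Lemma Ncl_rmax_absorbs vi w u x :
  N vi w -> (forall y, N vi y -> (r y <= r w)%O) -> N vi u -> N u x ->
  (r vi <= r x)%O -> N w x.
Proof.
move=> Nviw wmax Nviu Nux rvix.
have lw_rvi : (l w <= r vi)%O.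
  by case/orP: Nviw => [/eqP-> | /andP[_ //]]; apply: hlr.
have lx_ru : (l x <= r u)%O.
  by case/orP: Nux => [/eqP-> | /andP[_ //]]; apply: hlr.
rewrite /Ncl /iadj; case: (x =P w) => //= /eqP; rewrite eq_sym => ->.
by rewrite (le_trans lw_rvi rvix) (le_trans lx_ru (wmax u Nviu)).
Qed.

Definition unlabeled (lab : {ffun V -> nat}) : {set V} := [set v | lab v == 0%N].

Definition twos (lab : {ffun V -> nat}) : {set V} := [set v | lab v == 2%N].

Definition relabel (lab : {ffun V -> nat}) (vi w : V) : {ffun V -> nat} :=
  [ffun u => if u == w then 2%N
             else if u == vi then 1%N
             else if (lab u == 0%N) && adj w u then 3%N
             else lab u].

Variant label_step_spec (lab : {ffun V -> nat}) : {ffun V -> nat} -> Prop :=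
| LabelStepDone : unlabeled lab = set0 -> label_step_spec lab lab
| LabelStepRound vi w of vi \in unlabeled lab
    & (forall x, x \in unlabeled lab -> (r vi <= r x)%O)
    & N vi w & (forall u, N vi u -> (r u <= r w)%O) :
    label_step_spec lab (relabel lab vi w).

Lemma label_stepP lab : label_step_spec lab (label_step l r lab).
Proof.
rewrite /label_step; case: pickP => [v0 v0_unl | no_unl]; last first.
  by apply: LabelStepDone; apply/setP => x; rewrite !inE no_unl.
case: arg_minP => // vi vi_unl vi_min.
case: arg_maxP => [|w Nviw wmax]; first by rewrite /Ncl eqxx.
by apply: LabelStepRound; rewrite ?inE // => x; rewrite inE; apply: vi_min.
Qed.

Lemma twos_relabel lab vi w :
  vi \in unlabeled lab -> twos (relabel lab vi w) = w |: twos lab.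
Proof.
rewrite inE => /eqP lab_vi; apply/setP => z; rewrite !inE ffunE.
case: (z =P w) => //= _; case: (z =P vi) => [-> | _]; first by rewrite lab_vi.
by case: (lab z =P 0%N) => [-> | _] //=; case: (adj w z).
Qed.

Lemma unlabeled_relabel lab vi w :
  unlabeled (relabel lab vi w) = unlabeled lab :\ vi :\: [set x | N w x].
Proof.
apply/setP => x; rewrite !inE ffunE /Ncl.
case: (x =P w) => [// | _] /=; case: (x =P vi) => _ /=; first by rewrite andbF.
by case: (lab x =P 0%N) => [-> | /eqP/negbTE ->]; rewrite ?andbF //=; case: (adj w x).
Qed.

Definition labeling_inv (lab : {ffun V -> nat}) : Prop :=
  (forall x, x \notin unlabeled lab -> exists2 z, z \in twos lab & N z x) /\
  (forall z x, z \in twos lab -> N z x -> x \notin unlabeled lab).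

Lemma relabel_inv lab vi w :
  labeling_inv lab -> vi \in unlabeled lab -> N vi w ->
  labeling_inv (relabel lab vi w).
Proof.
move=> [dom_labeled closed_twos] vi_unl Nviw.
rewrite /labeling_inv twos_relabel // unlabeled_relabel; split.
  move=> x; rewrite in_setD in_setD1 negb_and negbK negb_and negbK inE.
  case/orP=> [Nwx | /orP[/eqP-> | x_lab]].
  - by exists w; rewrite ?setU11.
  - by exists w; rewrite ?setU11 // NclC.
  - by have [z z2 Nzx] := dom_labeled x x_lab; exists z; rewrite // inE z2 orbT.
move=> z x; rewrite in_setU1 in_setD in_setD1 inE => /orP[/eqP-> -> // | z2 Nzx].
by rewrite (negbTE (closed_twos z x z2 Nzx)) !andbF.
Qed.

Definition reachable_cover (k : nat) (D : {set V}) (lab : {ffun V -> nat}) : Prop :=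
  exists Dc : {set V}, [/\ dominating l r Dc, twos lab \subset Dc,
                           (#|Dc| <= k)%N & reconf l r k.+1 D Dc].

Lemma relabel_reachable k D lab vi w :
  vi \in unlabeled lab -> (forall x, x \in unlabeled lab -> (r vi <= r x)%O) ->
  N vi w -> (forall u, N vi u -> (r u <= r w)%O) -> labeling_inv lab ->
  reachable_cover k D lab -> reachable_cover k D (relabel lab vi w).
Proof.
move=> vi_unl vi_min Nviw wmax [dom_labeled closed_twos].
case=> Dc [domDc sDc cardDc reconfDc]; rewrite /reachable_cover twos_relabel //.
have [wDc | wDc] := boolP (w \in Dc).
  by exists Dc; split => //; rewrite subUset sub1set wDc.
have /dominatingP/(_ vi)[u uDc Nuvi] := domDc.
have u2 : u \notin twos lab.
  by apply: contraL vi_unl => u2; apply: closed_twos u2 Nuvi.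
have uw : u != w by apply: contraNneq wDc => <-.
have twos_sub : twos lab \subset (w |: Dc) :\ u.
  apply/subsetP => z z2; rewrite in_setD1 in_setU1 (subsetP sDc z z2) orbT andbT.
  by apply: contraNneq u2 => <-.
have domDc' : dominating l r ((w |: Dc) :\ u).
  apply: dominating_exchange domDc _ => x Nux.
  have [x_unl | x_lab] := boolP (x \in unlabeled lab).
    exists w; first by rewrite in_setD1 setU11 eq_sym uw.
    by apply: Ncl_rmax_absorbs Nviw wmax _ Nux (vi_min x x_unl); rewrite NclC.
  by have [z z2 Nzx] := dom_labeled x x_lab; exists z => //; apply: (subsetP twos_sub).
exists ((w |: Dc) :\ u); split => //.
- by rewrite subUset sub1set in_setD1 setU11 eq_sym uw.
- by rewrite card_exchange.
- exact: reconf_exchange.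
Qed.

Lemma label_step_inv lab : labeling_inv lab -> labeling_inv (label_step l r lab).
Proof. by case: label_stepP => // vi w vi_unl _ Nviw _ /relabel_inv; apply. Qed.

Lemma label_step_reachable k D lab :
  labeling_inv lab -> reachable_cover k D lab -> reachable_cover k D (label_step l r lab).
Proof. by case: label_stepP => // vi w; apply: relabel_reachable. Qed.

Lemma card_unlabeled_step lab :
  (#|unlabeled (label_step l r lab)| <= #|unlabeled lab|.-1)%N.
Proof.
case: label_stepP => [-> | vi w vi_unl _ _ _]; first by rewrite cards0.
rewrite unlabeled_relabel (cardsD1 vi (unlabeled lab)) vi_unl add1n /=.
exact/subset_leq_card/subsetDl.
Qed.

Local Notation labels n := (iter n (label_step l r) [ffun _ => 0%N]).

Lemma card_unlabeled_iter n : (#|unlabeled (labels n)| <= #|V| - n)%N.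
Proof.
elim: n => [|n IHn]; first by rewrite subn0 max_card.
apply: leq_trans (card_unlabeled_step _) _.
by rewrite subnS -!subn1 leq_sub2r.
Qed.

Lemma unlabeled_final_labels : unlabeled (final_labels l r) = set0.
Proof. by apply/eqP; rewrite -cards_eq0 -leqn0 -(subnn #|V|) card_unlabeled_iter. Qed.

Lemma labeling_inv_iter n : labeling_inv (labels n).
Proof.
elim: n => [|n IHn]; last exact: label_step_inv.
by split=> [x|z x]; rewrite !inE ffunE.
Qed.

Lemma reachable_cover_iter {k D} n :
  dominating l r D -> (#|D| <= k)%N -> reachable_cover k D (labels n).
Proof.
move=> domD cardD; elim: n => [|n IHn].
  exists D; split => //; last exact: reconf_refl (leqW cardD).
  by apply/subsetP => x; rewrite inE ffunE.
exact: label_step_reachable (labeling_inv_iter n) IHn.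
Qed.

Lemma dominating_V2 : dominating l r (V2 l r).
Proof.
have [dom_labeled _] := labeling_inv_iter #|V|.
apply/dominatingP => x; apply: dom_labeled.
by rewrite -/(final_labels l r) unlabeled_final_labels inE.
Qed.

End Reconfiguration.

Theorem lemma13 (d : Order.disp_t) (R : orderType d) (V : finType)
    (l r : V -> R)
    (hlr : forall v, (l v <= r v)%O)
    (hconn : connected_graph l r)
    (hrinj : injective r)
    (D : {set V}) :
  dominating l r D -> reconf l r #|D|.+1 D (V2 l r).
Proof.
move=> domD.
have [Dc [_ sDc cardDc reconfDc]] := reachable_cover_iter hlr #|V| domD (leqnn _).
exact: reconf_subset dominating_V2 sDc (leqW cardDc) reconfDc.
Qed.
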